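(* Under the setting of the algorithm in the context, fix $\delta>0$ and set, for each $i$, $$\epsilon_i=\delta\frac{q_i}{c_i(q_i-|s_i-1|)}.$$ Then for every $i_0\in\{1,\dots,n\}$, every pair of initial states $\theta_0^{(1)},\theta_0^{(2)}$ with $|\theta^{(2)}_{0,i_0}-\theta^{(1)}_{0,i_0}|\le\delta$ and $\theta^{(2)}_{0,i}=\theta^{(1)}_{0,i}$ for $i\neq i_0$, and every Borel set $\mathcal{O}\subseteq(\mathbb{R}^n)^{\mathbb{N}}$, $$\mathbb{P}\{\boldsymbol\eta: X_{\theta_0^{(1)}}(\boldsymbol\eta)\in\mathcal{O}\}\le e^{\epsilon_{i_0}}\,\mathbb{P}\{\boldsymbol\eta: X_{\theta_0^{(2)}}(\boldsymbol\eta)\in\mathcal{O}\}.$$ Consequently the algorithm is $\epsilon$-differentially private with $\epsilon=\max_i\epsilon_i$.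
   Context: $n$ agents communicate over an undirected connected weighted graph with symmetric nonnegative adjacency matrix $A$, weighted degree matrix $D=\mathrm{diag}(A\mathbf{1}_n)$, Laplacian $L=D-A$, and maximal weighted degree $d_{\max}$. The algorithm is $$\theta(k+1)=\theta(k)-hLx(k)+S\eta(k),\qquad x(k)=\theta(k)+\eta(k),\qquad \theta(0)=\theta_0,$$ where $0<h<1/d_{\max}$, $S=\mathrm{diag}(s_1,\dots,s_n)$ with $s_i\in(0,2)$, and the noises $\eta_i(k)$ are mutually independent with $\eta_i(k)\sim\mathrm{Lap}(c_iq_i^k)$ (zero-mean Laplace with density $\frac{1}{2b}e^{-|x|/b}$), $c_i>0$, $q_i\in(|s_i-1|,1)$. For fixed $\theta_0$, $X_{\theta_0}:(\mathbb{R}^n)^{\mathbb{N}}\to(\mathbb{R}^n)^{\mathbb{N}}$ maps the noise sequence $\boldsymbol\eta=\{\eta(k)\}_{k\ge0}$ to the message sequence $\{x(k)\}_{k\ge0}$. Initial states are $\delta$-adjacent if they differ in at most one component by at most $\delta$; the algorithm is $\epsilon$-differentially private if the displayed inequality holds with $e^{\epsilon}$ for all $\delta$-adjacent pairs and all Borel $\mathcal{O}$ (product topology). *)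

From Stdlib Require Import Reals Lra Relations.
Open Scope R_scope.

Fixpoint rsum (n : nat) (f : nat -> R) : R :=
  match n with O => 0 | S m => rsum m f + f m end.

Fixpoint rprod (n : nat) (f : nat -> R) : R :=
  match n with O => 1 | S m => rprod m f * f m end.

Fixpoint rmax_upto (n : nat) (f : nat -> R) : R :=
  match n with O => 0 | S m => Rmax (rmax_upto m f) (f m) end.

(* Vectors of R^n are nat -> R (only indices < n matter); matrices nat -> nat -> R. *)
Definition vec := nat -> R.
Definition vseq := nat -> vec.

Definition symmetric_nonneg (n : nat) (A : nat -> nat -> R) : Prop :=
  forall i j, (i < n)%nat -> (j < n)%nat -> A i j = A j i /\ 0 <= A i j.

Definition edge (n : nat) (A : nat -> nat -> R) (i j : nat) : Prop :=
  (i < n)%nat /\ (j < n)%nat /\ 0 < A i j.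

Definition connected (n : nat) (A : nat -> nat -> R) : Prop :=
  forall i j, (i < n)%nat -> (j < n)%nat -> clos_refl_trans nat (edge n A) i j.

Definition degree (n : nat) (A : nat -> nat -> R) (i : nat) : R :=
  rsum n (fun j => A i j).

Definition dmax (n : nat) (A : nat -> nat -> R) : R := rmax_upto n (degree n A).

Definition lap (n : nat) (A : nat -> nat -> R) (x : vec) : vec :=
  fun i => degree n A i * x i - rsum n (fun j => A i j * x j).

Fixpoint theta (n : nat) (A : nat -> nat -> R) (h : R) (s : nat -> R)
    (theta0 : vec) (eta : vseq) (k : nat) : vec :=
  match k with
  | O => theta0
  | S k' =>
      let th := theta n A h s theta0 eta k' in
      let x := fun i => th i + eta k' i in
      fun i => th i - h * lap n A x i + s i * eta k' i
  end.

Definition Xmap (n : nat) (A : nat -> nat -> R) (h : R) (s : nat -> R)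
    (theta0 : vec) (eta : vseq) : vseq :=
  fun k i => theta n A h s theta0 eta k i + eta k i.

(* CDF of the zero-mean Laplace law Lap(b), density exp(-|x|/b)/(2b) *)
Definition laplace_cdf (b t : R) : R :=
  if Rlt_dec t 0 then exp (t / b) / 2 else 1 - exp (- t / b) / 2.

Definition rect (n K : nat) (a b : vseq) : vseq -> Prop :=
  fun eta => forall k i, (k < K)%nat -> (i < n)%nat -> a k i < eta k i <= b k i.

Definition is_sigma_algebra (S : (vseq -> Prop) -> Prop) : Prop :=
  S (fun _ => True) /\
  (forall E, S E -> S (fun x => ~ E x)) /\
  (forall F : nat -> vseq -> Prop, (forall m, S (F m)) -> S (fun x => exists m, F m x)).

(* Borel sets of (R^n)^N with the product topology = the sigma-algebra generated
   by the cylinder rectangles (countable product of second countable spaces). *)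
Definition borel (n : nat) (E : vseq -> Prop) : Prop :=
  forall S, is_sigma_algebra S -> (forall K a b, S (rect n K a b)) -> S E.

(* P is the law of the noise sequence eta: a (countably additive, nonnegative)
   probability measure on the Borel sets under which the eta_i(k) are
   independent with eta_i(k) ~ Lap(c_i q_i^k).  It is specified on cylinder
   rectangles, which determines it uniquely on Borel sets (pi-lambda). *)
Definition noise_law (n : nat) (c q : nat -> R) (P : (vseq -> Prop) -> R) : Prop :=
  (forall E, borel n E -> 0 <= P E) /\
  (forall F : nat -> vseq -> Prop,
      (forall m, borel n (F m)) ->
      (forall m1 m2 x, m1 <> m2 -> F m1 x -> F m2 x -> False) ->
      infinite_sum (fun m => P (F m)) (P (fun x => exists m, F m x))) /\
  (forall K a b, (forall k i, (k < K)%nat -> (i < n)%nat -> a k i <= b k i) ->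
      P (rect n K a b) =
      rprod K (fun k => rprod n (fun i =>
         laplace_cdf (c i * q i ^ k) (b k i) - laplace_cdf (c i * q i ^ k) (a k i)))).

Definition adjacent (n : nat) (delta : R) (t1 t2 : vec) : Prop :=
  exists i0, (i0 < n)%nat /\ Rabs (t2 i0 - t1 i0) <= delta /\
    forall i, (i < n)%nat -> i <> i0 -> t2 i = t1 i.

Definition diff_private (n : nat) (A : nat -> nat -> R) (h : R) (s : nat -> R)
    (P : (vseq -> Prop) -> R) (delta eps : R) : Prop :=
  forall t1 t2 O, adjacent n delta t1 t2 -> borel n O ->
    P (fun eta => O (Xmap n A h s t1 eta))
      <= exp eps * P (fun eta => O (Xmap n A h s t2 eta)).

Definition eps_i (delta : R) (s c q : nat -> R) (i : nat) : R :=
  delta * q i / (c i * (q i - Rabs (s i - 1))).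

(* Changing the initial state of agent i0 by Delta, |Delta| <= delta, is the same as
   translating the noise: with D k = (I - S)^k Delta, the run started at t1 with noise eta
   coincides with the run started at t2 with noise eta - D.  Hence
   P (X_t1 in O) = P (eta - D in X_t2^-1 O), and it suffices to compare the law of the
   translated noise with the law of the noise.  Translating Lap(b) by d multiplies the
   probability of an interval by at most exp(|d| / b); on a cylinder rectangle the translated
   law is therefore at most exp (sum_k |1 - s_i0|^k delta / (c_i0 q_i0^k)) <= exp eps_i0 times
   the original one, the sum being geometric because |1 - s_i0| < q_i0.  Finally an inequality
   between two finite measures on rectangles extends to all Borel sets: the sets that can be
   approximated in both measures by finite disjoint unions of boxes form a sigma-algebra
   containing the rectangles. *)

From Stdlib Require Import Reals Lra Lia ZArith List.
From Stdlib Require Import FunctionalExtensionality PropExtensionality Classical.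
Import ListNotations.
Open Scope R_scope.

(** * Finite sums and products *)

Lemma rsum_nonneg N f : (forall j, (j < N)%nat -> 0 <= f j) -> 0 <= rsum N f.
Proof.
  induction N as [|N IH]; simpl; intros Hf; [lra|].
  apply Rplus_le_le_0_compat; [apply IH; intros j Hj|]; apply Hf; lia.
Qed.

Lemma rsum_ge_term N f j : (forall j, (j < N)%nat -> 0 <= f j) -> (j < N)%nat -> f j <= rsum N f.
Proof.
  induction N as [|N IH]; simpl; intros Hf Hj; [lia|].
  assert (HfN : 0 <= f N) by (apply Hf; lia).
  destruct (Nat.eq_dec j N) as [->|Hne].
  - assert (0 <= rsum N f) by (apply rsum_nonneg; intros i Hi; apply Hf; lia); lra.
  - assert (f j <= rsum N f) by (apply IH; [intros i Hi; apply Hf|]; lia); lra.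
Qed.

Lemma rsum_single N f i0 : (i0 < N)%nat -> (forall i, (i < N)%nat -> i <> i0 -> f i = 0) ->
  rsum N f = f i0.
Proof.
  induction N as [|N IH]; simpl; intros Hi0 Hf; [lia|].
  destruct (Nat.eq_dec i0 N) as [->|Hne].
  - assert (H0 : forall M, (M <= N)%nat -> rsum M f = 0).
    { induction M as [|M IHM]; simpl; intros HM; [reflexivity|]; rewrite IHM, (Hf M) by lia; ring. }
    rewrite H0 by lia; ring.
  - rewrite IH; [rewrite (Hf N) by lia; ring | lia | intros i Hi Hne'; apply Hf; lia].
Qed.

Lemma rsum_geom_le K r : 0 <= r < 1 -> rsum K (fun k => r ^ k) <= / (1 - r).
Proof.
  intros Hr.
  assert (Hgeom : rsum K (fun k => r ^ k) * (1 - r) = 1 - r ^ K)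
    by (induction K as [|K IH]; simpl; [ring | rewrite Rmult_plus_distr_r, IH; ring]).
  pose proof (pow_le r K (proj1 Hr)).
  apply Rmult_le_reg_r with (1 - r); [lra|]; rewrite Hgeom, Rinv_l; lra.
Qed.

Lemma rprod_nonneg N u : (forall j, (j < N)%nat -> 0 <= u j) -> 0 <= rprod N u.
Proof.
  induction N as [|N IH]; simpl; intros Hu; [lra|].
  apply Rmult_le_pos; [apply IH; intros j Hj|]; apply Hu; lia.
Qed.

Lemma rprod_le_compat N u v : (forall j, (j < N)%nat -> 0 <= u j <= v j) -> rprod N u <= rprod N v.
Proof.
  induction N as [|N IH]; simpl; intros Huv; [lra|].
  apply Rmult_le_compat.
  - apply rprod_nonneg; intros j Hj; apply Huv; lia.
  - apply Huv; lia.
  - apply IH; intros j Hj; apply Huv; lia.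
  - apply Huv; lia.
Qed.

Lemma rprod_mult N u v : rprod N (fun j => u j * v j) = rprod N u * rprod N v.
Proof. induction N as [|N IH]; simpl; [ring | rewrite IH; ring]. Qed.

Lemma rprod_exp N f : rprod N (fun j => exp (f j)) = exp (rsum N f).
Proof. induction N as [|N IH]; simpl; [rewrite exp_0 | rewrite IH, exp_plus]; reflexivity. Qed.

Lemma rmax_upto_ge N f i0 : (i0 < N)%nat -> f i0 <= rmax_upto N f.
Proof.
  induction N as [|N IH]; simpl; intros Hi0; [lia|].
  destruct (Nat.eq_dec i0 N) as [->|Hne]; [apply Rmax_r|].
  apply Rle_trans with (rmax_upto N f); [apply IH; lia | apply Rmax_l].
Qed.

Lemma exp_le_compat x y : x <= y -> exp x <= exp y.
Proof. intros [H| ->]; [left; apply exp_increasing, H | right; reflexivity]. Qed.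

(** * Sigma-algebras and Borel functions *)

Lemma set_ext (E F : vseq -> Prop) : (forall x, E x <-> F x) -> E = F.
Proof.
  intros H; apply functional_extensionality; intros x; apply propositional_extensionality, H.
Qed.

Section SigmaAlgebra.
Variable S : (vseq -> Prop) -> Prop.
Hypothesis HS : is_sigma_algebra S.

Lemma sigma_ext E F : S E -> (forall x, E x <-> F x) -> S F.
Proof. intros HE H; rewrite <- (set_ext E F H); exact HE. Qed.

Lemma sigma_True : S (fun _ => True).
Proof. apply HS. Qed.

Lemma sigma_compl E : S E -> S (fun x => ~ E x).
Proof. apply HS. Qed.

Lemma sigma_Union (F : nat -> vseq -> Prop) :
  (forall m, S (F m)) -> S (fun x => exists m, F m x).
Proof. apply HS. Qed.

Lemma sigma_False : S (fun _ => False).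
Proof. apply (sigma_ext _ _ (sigma_compl _ sigma_True)); tauto. Qed.

Lemma sigma_or E F : S E -> S F -> S (fun x => E x \/ F x).
Proof.
  intros HE HF.
  apply (sigma_ext (fun x => exists m, (if Nat.eqb m 0 then E else F) x)).
  - apply sigma_Union; intros [|m]; assumption.
  - intros x; split.
    + intros [[|m] H]; auto.
    + intros [H|H]; [exists 0%nat | exists 1%nat]; exact H.
Qed.

Lemma sigma_and E F : S E -> S F -> S (fun x => E x /\ F x).
Proof.
  intros HE HF.
  apply (sigma_ext (fun x => ~ (~ E x \/ ~ F x))).
  - apply sigma_compl, sigma_or; apply sigma_compl; assumption.
  - intros x; tauto.
Qed.

Lemma sigma_forall_lt K (F : nat -> vseq -> Prop) :
  (forall k, (k < K)%nat -> S (F k)) -> S (fun x => forall k, (k < K)%nat -> F k x).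
Proof.
  induction K as [|K IH]; intros HF.
  - apply (sigma_ext _ _ sigma_True); split; [intros _ k Hk; lia | trivial].
  - apply (sigma_ext (fun x => (forall k, (k < K)%nat -> F k x) /\ F K x)).
    + apply sigma_and; [apply IH; intros k Hk|]; apply HF; lia.
    + intros x; split.
      * intros [H1 H2] k Hk.
        destruct (Nat.eq_dec k K) as [->|Hne]; [exact H2 | apply H1; lia].
      * intros H; split; [intros k Hk|]; apply H; lia.
Qed.

End SigmaAlgebra.

Section Borel.
Variable n : nat.

Lemma borel_sigma : is_sigma_algebra (borel n).
Proof.
  repeat split.
  - intros S HS _; apply HS.
  - intros E HE S HS Hr; apply HS, HE; assumption.
  - intros F HF S HS Hr; apply HS; intros m; apply HF; assumption.
Qed.

Lemma borel_rect K a b : borel n (rect n K a b).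
Proof. intros S _ Hr; apply Hr. Qed.

Lemma borel_preimage (g : vseq -> vseq) :
  (forall K a b, borel n (fun x => rect n K a b (g x))) ->
  forall E, borel n E -> borel n (fun x => E (g x)).
Proof.
  intros Hg E HE; apply (HE (fun E => borel n (fun x => E (g x)))); [|exact Hg].
  repeat split.
  - apply sigma_True, borel_sigma.
  - intros F HF; apply sigma_compl; [apply borel_sigma | exact HF].
  - intros F HF; apply sigma_Union; [apply borel_sigma | exact HF].
Qed.

End Borel.

Lemma finite_bound (g : vseq) K N :
  exists M : nat, forall k i, (k < K)%nat -> (i < N)%nat -> Rabs (g k i) < INR M.
Proof.
  set (B := rsum K (fun k => rsum N (fun i => Rabs (g k i)))).
  destruct (INR_archimed 1 B) as [M HM]; [lra|].
  exists M; intros k i Hk Hi.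
  assert (Hrow : forall k, 0 <= rsum N (fun i => Rabs (g k i)))
    by (intros k'; apply rsum_nonneg; intros; apply Rabs_pos).
  pose proof (rsum_ge_term N (fun i => Rabs (g k i)) i (fun _ _ => Rabs_pos _) Hi).
  pose proof (rsum_ge_term K (fun k => rsum N (fun i => Rabs (g k i))) k (fun k _ => Hrow k) Hk).
  unfold B in HM; simpl in *; lra.
Qed.

Lemma Z_as_nat_diff z : exists m1 m2, IZR z = INR m1 - INR m2.
Proof.
  destruct z as [|p|p].
  - exists 0%nat, 0%nat; simpl; lra.
  - exists (Pos.to_nat p), 0%nat; rewrite (INR_IZR_INZ (Pos.to_nat p)), positive_nat_Z; simpl; lra.
  - exists 0%nat, (Pos.to_nat p); rewrite (INR_IZR_INZ (Pos.to_nat p)), positive_nat_Z.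
    change (IZR (Zneg p)) with (- IZR (Zpos p)); simpl; lra.
Qed.

Lemma rational_between u v :
  u < v -> exists m1 m2 p, u < (INR m1 - INR m2) / INR (S p) < v.
Proof.
  intros Huv.
  destruct (archimed_cor1 (v - u)) as [[|p] [Hp Hp0]]; [lra|lia|].
  destruct (archimed (u * INR (S p))) as [H1 H2].
  destruct (Z_as_nat_diff (up (u * INR (S p)))) as [m1 [m2 Hm]].
  exists m1, m2, p; rewrite <- Hm.
  assert (HSp : 0 < INR (S p)) by (apply lt_0_INR; lia).
  split.
  - apply Rmult_lt_reg_r with (INR (S p)); [exact HSp|].
    unfold Rdiv; rewrite Rmult_assoc, Rinv_l; lra.
  - apply Rle_lt_trans with (u + / INR (S p)); [|lra].
    apply Rmult_le_reg_r with (INR (S p)); [exact HSp|].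
    unfold Rdiv; rewrite Rmult_assoc, Rinv_l, Rmult_plus_distr_r, Rinv_l; lra.
Qed.

Section BorelFunctions.
Variable n : nat.
Let Hb := borel_sigma n.

Definition borel_fun (f : vseq -> R) : Prop := forall t, borel n (fun x => f x <= t).

Lemma borel_fun_ext f g : borel_fun f -> (forall x, f x = g x) -> borel_fun g.
Proof.
  intros Hf E t; apply (sigma_ext _ _ _ (Hf t)); intros x; rewrite E; tauto.
Qed.

Lemma borel_fun_lt f t : borel_fun f -> borel n (fun x => f x < t).
Proof.
  intros Hf.
  apply (sigma_ext _ (fun x => exists m, f x <= t - / INR (S m))).
  - apply (sigma_Union _ Hb); intros m; apply Hf.
  - intros x; split.
    + intros [m Hm]; assert (0 < / INR (S m)) by (apply Rinv_0_lt_compat, lt_0_INR; lia); lra.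
    + intros H; destruct (archimed_cor1 (t - f x)) as [[|m] [Hm Hm0]]; [lra|lia|].
      exists m; lra.
Qed.

Lemma borel_fun_gt f t : borel_fun f -> borel n (fun x => t < f x).
Proof.
  intros Hf; apply (sigma_ext _ _ _ (sigma_compl _ Hb _ (Hf t))).
  intros x; lra.
Qed.

Lemma borel_fun_ge f t : borel_fun f -> borel n (fun x => t <= f x).
Proof.
  intros Hf.
  apply (sigma_ext _ _ _ (sigma_compl _ Hb _ (borel_fun_lt f t Hf))).
  intros x; lra.
Qed.

Lemma borel_fun_const r : borel_fun (fun _ => r).
Proof.
  intros t; destruct (Rle_dec r t).
  - apply (sigma_ext _ _ _ (sigma_True _ Hb)); tauto.
  - apply (sigma_ext _ _ _ (sigma_False _ Hb)); tauto.
Qed.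

Lemma borel_fun_coord k i : (i < n)%nat -> borel_fun (fun x => x k i).
Proof.
  intros Hi t.
  set (up_t := fun M : nat => fun k' i' => if andb (Nat.eqb k' k) (Nat.eqb i' i) then t else INR M).
  apply (sigma_ext _
           (fun x => exists M : nat, rect n (S k) (fun _ _ => - INR M) (up_t M) x)).
  - apply (sigma_Union _ Hb); intros M; apply borel_rect.
  - intros x; split.
    + intros [M HM]; destruct (HM k i (Nat.lt_succ_diag_r k) Hi) as [_ H].
      unfold up_t in H; rewrite !Nat.eqb_refl in H; exact H.
    + intros Hx; destruct (finite_bound x (S k) n) as [M HM]; exists M.
      intros k' i' Hk' Hi'; specialize (HM k' i' Hk' Hi'); apply Rabs_def2 in HM; split; [lra|].
      unfold up_t; destruct (Nat.eqb_spec k' k), (Nat.eqb_spec i' i); simpl; try lra.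
      subst; exact Hx.
Qed.

(* [f x + g x > t] iff [f x > r] and [g x > t - r] for some rational [r]. *)
Lemma borel_fun_plus f g : borel_fun f -> borel_fun g -> borel_fun (fun x => f x + g x).
Proof.
  intros Hf Hg t.
  set (r := fun m1 m2 p : nat => (INR m1 - INR m2) / INR (S p)).
  apply (sigma_ext _
           (fun x => ~ exists m1 m2 p, r m1 m2 p < f x /\ t - r m1 m2 p < g x)).
  - apply (sigma_compl _ Hb).
    do 3 (apply (sigma_Union _ Hb); intro).
    apply (sigma_and _ Hb); apply borel_fun_gt; assumption.
  - intros x; split.
    + intros H; apply Rnot_lt_le; intros Hlt; apply H.
      destruct (rational_between (t - g x) (f x)) as [m1 [m2 [p Hp]]]; [lra|].
      exists m1, m2, p; unfold r; lra.
    + intros H [m1 [m2 [p Hp]]]; lra.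
Qed.

Lemma borel_fun_scal r f : borel_fun f -> borel_fun (fun x => r * f x).
Proof.
  intros Hf t.
  destruct (Rtotal_order r 0) as [Hr|[->|Hr]].
  - set (u := t / r); assert (Ht : t = r * u) by (unfold u; field; lra).
    apply (sigma_ext _ _ _ (borel_fun_ge f u Hf)); intros x; rewrite Ht; nra.
  - apply (borel_fun_ext _ _ (borel_fun_const 0)); intros; ring.
  - set (u := t / r); assert (Ht : t = r * u) by (unfold u; field; lra).
    apply (sigma_ext _ _ _ (Hf u)); intros x; rewrite Ht; nra.
Qed.

Lemma borel_fun_minus f g : borel_fun f -> borel_fun g -> borel_fun (fun x => f x - g x).
Proof.
  intros Hf Hg; apply (borel_fun_ext (fun x => f x + -1 * g x)); [|intros; ring].
  apply borel_fun_plus, borel_fun_scal; assumption.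
Qed.

Lemma borel_fun_rsum N (f : vseq -> nat -> R) :
  (forall j, (j < N)%nat -> borel_fun (fun x => f x j)) -> borel_fun (fun x => rsum N (f x)).
Proof.
  induction N as [|N IH]; intros Hf; simpl.
  - apply borel_fun_const.
  - apply borel_fun_plus; [apply IH; intros j Hj|]; apply Hf; lia.
Qed.

Lemma borel_preimage_fun (g : vseq -> vseq) :
  (forall k i, (i < n)%nat -> borel_fun (fun x => g x k i)) ->
  forall E, borel n E -> borel n (fun x => E (g x)).
Proof.
  intros Hg; apply borel_preimage; intros K a b.
  apply (sigma_ext _ (fun x => forall k, (k < K)%nat ->
                       forall i, (i < n)%nat -> a k i < g x k i <= b k i)).
  - apply (sigma_forall_lt _ Hb); intros k Hk; apply (sigma_forall_lt _ Hb); intros i Hi.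
    apply (sigma_and _ Hb); [apply borel_fun_gt|]; apply Hg, Hi.
  - intros x; unfold rect; split; intros H; intros; apply H; assumption.
Qed.

End BorelFunctions.

(** * Finite measures *)

Lemma infinite_sum_scal C s l : infinite_sum s l -> infinite_sum (fun k => C * s k) (C * l).
Proof.
  intros Hs eps Heps.
  assert (HC1 : 0 < Rabs C + 1) by (pose proof (Rabs_pos C); lra).
  destruct (Hs (eps / (Rabs C + 1))) as [N HN]; [apply Rdiv_lt_0_compat; assumption|].
  exists N; intros k Hk; specialize (HN k Hk); unfold R_dist in *.
  replace (sum_f_R0 (fun k => C * s k) k - C * l) with ((sum_f_R0 s k - l) * C)
    by (rewrite (Rmult_comm (sum_f_R0 s k - l)), Rmult_minus_distr_l, scal_sum;
        f_equal; apply sum_eq; intros; ring).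
  rewrite Rabs_mult.
  apply Rle_lt_trans with (Rabs (sum_f_R0 s k - l) * (Rabs C + 1)).
  - apply Rmult_le_compat_l; [apply Rabs_pos | lra].
  - apply Rmult_lt_reg_r with (/ (Rabs C + 1)); [apply Rinv_0_lt_compat, HC1|].
    rewrite Rmult_assoc, Rinv_r, Rmult_1_r; [exact HN | lra].
Qed.

Lemma infinite_sum_eventually_const s l L N0 :
  infinite_sum s l -> (forall N, (N0 <= N)%nat -> sum_f_R0 s N = L) -> l = L.
Proof.
  intros Hs HL; apply (uniqueness_sum s); [exact Hs|].
  intros eps Heps; exists N0; intros N HN.
  rewrite HL by exact HN; unfold R_dist; rewrite Rminus_diag, Rabs_R0; exact Heps.
Qed.

Definition is_measure (n : nat) (m : (vseq -> Prop) -> R) : Prop :=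
  (forall E, borel n E -> 0 <= m E) /\
  (forall F : nat -> vseq -> Prop,
      (forall k, borel n (F k)) ->
      (forall k1 k2 x, k1 <> k2 -> F k1 x -> F k2 x -> False) ->
      infinite_sum (fun k => m (F k)) (m (fun x => exists k, F k x))).

Lemma noise_law_measure n c q P : noise_law n c q P -> is_measure n P.
Proof. intros [H0 [Hadd _]]; split; assumption. Qed.

Lemma is_measure_scal n C m : 0 <= C -> is_measure n m -> is_measure n (fun E => C * m E).
Proof.
  intros HC [H0 Hadd]; split.
  - intros E HE; apply Rmult_le_pos; [exact HC | apply H0, HE].
  - intros F HF Hd; apply infinite_sum_scal, Hadd; assumption.
Qed.

Lemma is_measure_preimage n m (g : vseq -> vseq) :
  (forall E, borel n E -> borel n (fun x => E (g x))) ->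
  is_measure n m -> is_measure n (fun E => m (fun x => E (g x))).
Proof.
  intros Hg [H0 Hadd]; split.
  - intros E HE; apply H0, Hg, HE.
  - intros F HF Hd; apply (Hadd (fun k x => F k (g x))); [intros k; apply Hg, HF | eauto].
Qed.

Section Measure.
Variable n : nat.
Let Hb := borel_sigma n.
Variable m : (vseq -> Prop) -> R.
Hypothesis Hm : is_measure n m.

Lemma measure_ext X Y : (forall x, X x <-> Y x) -> m X = m Y.
Proof. intros H; rewrite (set_ext X Y H); reflexivity. Qed.

Lemma measure_empty : m (fun _ => False) = 0.
Proof.
  destruct Hm as [H0 Hadd].
  pose proof (Hadd (fun _ _ => False) (fun _ => sigma_False _ Hb) ltac:(tauto)) as Hs.
  cbv beta in Hs.
  rewrite (measure_ext (fun x => exists _ : nat, False) (fun _ => False)) in Hs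
    by (intros x; split; [intros [_ []] | tauto]).
  set (e := m (fun _ => False)) in *.
  assert (He : 0 <= e) by apply (H0 _ (sigma_False _ Hb)).
  destruct He as [He|He]; [exfalso | symmetry; exact He].
  destruct (Hs e He) as [N HN]; specialize (HN (S N) (Nat.le_succ_diag_r N)).
  unfold R_dist in HN; rewrite sum_cte in HN.
  replace (e * INR (S (S N)) - e) with (e * INR (S N)) in HN by (rewrite (S_INR (S N)); ring).
  rewrite Rabs_pos_eq in HN by (apply Rmult_le_pos; [lra | apply pos_INR]).
  pose proof (le_INR 1 (S N) ltac:(lia)); simpl in *; nra.
Qed.

Lemma measure_add X Y : borel n X -> borel n Y -> (forall x, X x -> Y x -> False) ->
  m (fun x => X x \/ Y x) = m X + m Y.
Proof.
  intros HX HY Hd.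
  set (F := fun k : nat => match k with 0%nat => X | 1%nat => Y | _ => fun _ => False end).
  assert (HF : forall k, borel n (F k))
    by (intros [|[|k]]; [exact HX | exact HY | exact (sigma_False _ Hb)]).
  assert (HFd : forall k1 k2 x, k1 <> k2 -> F k1 x -> F k2 x -> False)
    by (intros [|[|k1]] [|[|k2]] x Hne; simpl; try tauto; try lia; eauto).
  pose proof (proj2 Hm F HF HFd) as Hs.
  rewrite (measure_ext _ (fun x => X x \/ Y x)) in Hs.
  - apply (infinite_sum_eventually_const _ _ _ 1%nat Hs).
    intros [|N] HN; [lia|]; induction N as [|N IH]; [reflexivity|].
    simpl in *; rewrite IH by lia; rewrite measure_empty; ring.
  - intros x; split.
    + intros [[|[|k]] Hx]; simpl in Hx; tauto.
    + intros [Hx|Hx]; [exists 0%nat | exists 1%nat]; exact Hx.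
Qed.

Lemma measure_mono X Y : borel n X -> borel n Y -> (forall x, X x -> Y x) -> m X <= m Y.
Proof.
  intros HX HY Hs.
  assert (HYX : borel n (fun x => Y x /\ ~ X x))
    by (apply (sigma_and _ Hb), (sigma_compl _ Hb); assumption).
  rewrite (measure_ext Y (fun x => X x \/ (Y x /\ ~ X x))).
  - rewrite measure_add by (assumption || tauto); pose proof (proj1 Hm _ HYX); lra.
  - intros x; split; [destruct (classic (X x)); tauto | intros [Hx|[Hx _]]; auto].
Qed.

Lemma measure_le_union X Y Z : borel n X -> borel n Y -> borel n Z ->
  (forall x, X x -> Y x \/ Z x) -> m X <= m Y + m Z.
Proof.
  intros HX HY HZ Hs.
  assert (HZY : borel n (fun x => Z x /\ ~ Y x))
    by (apply (sigma_and _ Hb), (sigma_compl _ Hb); assumption).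
  apply Rle_trans with (m (fun x => Y x \/ (Z x /\ ~ Y x))).
  - apply measure_mono; [exact HX | apply (sigma_or _ Hb); assumption |].
    intros x Hx; destruct (classic (Y x)); [left | right]; [assumption|].
    destruct (Hs x Hx); tauto.
  - rewrite measure_add by (assumption || tauto).
    pose proof (measure_mono _ Z HZY HZ (fun x H => proj1 H)); lra.
Qed.

Lemma measure_cont_incr (F : nat -> vseq -> Prop) :
  (forall j, borel n (F j)) -> (forall j x, F j x -> F (S j) x) ->
  forall eps, 0 < eps -> exists M, m (fun x => exists j, F j x) - eps < m (F M).
Proof.
  intros HF Hincr eps Heps.
  assert (Hle : forall i j x, (i <= j)%nat -> F i x -> F j x)
    by (intros i j x Hij; induction Hij; auto).
  set (G := fun j x => match j with 0%nat => F 0%nat x | S j' => F j x /\ ~ F j' x end).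
  assert (HG : forall j, borel n (G j)).
  { intros [|j]; [apply HF | apply (sigma_and _ Hb); [apply HF | apply (sigma_compl _ Hb), HF]]. }
  assert (HGd : forall j1 j2 x, j1 <> j2 -> G j1 x -> G j2 x -> False).
  { assert (H : forall i j x, (i < j)%nat -> G i x -> G j x -> False).
    { intros i j x Hij Hi Hj; destruct j as [|j]; [lia|]; destruct Hj as [_ Hj].
      apply Hj, (Hle i); [lia|]; destruct i; [exact Hi | apply Hi]. }
    intros j1 j2 x Hne H1 H2; destruct (proj1 (Nat.lt_gt_cases j1 j2) Hne) as [Hlt|Hlt].
    - exact (H _ _ _ Hlt H1 H2).
    - exact (H _ _ _ Hlt H2 H1). }
  assert (HGF : forall x, (exists j, G j x) <-> (exists j, F j x)).
  { intros x; split.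
    - intros [[|j] Hx]; [exists 0%nat | exists (S j)]; apply Hx.
    - intros [j Hx]; induction j as [|j IH]; [exists 0%nat; exact Hx|].
      destruct (classic (F j x)) as [Hj|Hj]; [exact (IH Hj) | exists (S j); split; assumption]. }
  assert (Hpart : forall N, sum_f_R0 (fun j => m (G j)) N = m (F N)).
  { induction N as [|N IH]; [reflexivity|].
    simpl; rewrite IH, <- measure_add;
      [| apply HF | apply HG | intros x Hx [_ Hx']; exact (Hx' Hx)].
    apply measure_ext; intros x; split.
    - intros [Hx|[Hx _]]; [apply Hincr|]; exact Hx.
    - intros Hx; destruct (classic (F N x)); [left | right; split]; assumption. }
  pose proof (proj2 Hm G HG HGd) as Hs; rewrite (measure_ext _ _ HGF) in Hs.
  destruct (Hs eps Heps) as [M HM]; exists M.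
  specialize (HM M (le_n M)); rewrite Hpart in HM; unfold R_dist in HM.
  apply Rabs_def2 in HM; lra.
Qed.

Lemma measure_tail_incr (F : nat -> vseq -> Prop) :
  (forall j, borel n (F j)) -> (forall j x, F j x -> F (S j) x) ->
  forall eps, 0 < eps -> exists M0, forall M, (M0 <= M)%nat ->
    m (fun x => (exists j, F j x) /\ ~ F M x) < eps.
Proof.
  intros HF Hincr eps Heps.
  assert (HU : borel n (fun x => exists j, F j x)) by (apply (sigma_Union _ Hb), HF).
  destruct (measure_cont_incr F HF Hincr eps Heps) as [M0 HM0]; exists M0; intros M HM.
  assert (Hle : forall x, F M0 x -> F M x) by (intros x; induction HM; auto).
  rewrite (measure_ext (fun x => exists j, F j x)
                       (fun x => F M x \/ ((exists j, F j x) /\ ~ F M x)))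
    in HM0 by (intros x; split; [|intros [H|[H _]]];
               [destruct (classic (F M x)); [left|right]|..]; eauto).
  rewrite (measure_add) in HM0; [| apply HF | | intros x H [_ H']; exact (H' H)].
  - pose proof (measure_mono _ _ (HF M0) (HF M) Hle); lra.
  - apply (sigma_and _ Hb); [exact HU | apply (sigma_compl _ Hb), HF].
Qed.

End Measure.

(** * Boxes *)

Section Boxes.
Variable n : nat.
Let Hb := borel_sigma n.

(* Boxes are finite intersections of half-spaces [x k i <= v] or [v < x k i]; unlike
   rectangles, their complements are finite disjoint unions of boxes.  The index [i] carries
   [i < n] because Borel sets do not see the other coordinates. *)
Record lit := Lit { lit_k : nat; lit_i : {i : nat | (i < n)%nat}; lit_upper : bool; lit_val : R }.

Definition lit_holds (c : lit) (x : vseq) : Prop :=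
  let v := x (lit_k c) (proj1_sig (lit_i c)) in
  if lit_upper c then v <= lit_val c else lit_val c < v.

Definition lit_neg (c : lit) : lit := Lit (lit_k c) (lit_i c) (negb (lit_upper c)) (lit_val c).

Lemma lit_holds_neg c x : lit_holds (lit_neg c) x <-> ~ lit_holds c x.
Proof. unfold lit_holds; destruct c as [k i [|] v]; simpl; lra. Qed.

Lemma borel_lit c : borel n (lit_holds c).
Proof.
  destruct c as [k [i Hi] [|] v]; unfold lit_holds; simpl.
  - apply (borel_fun_coord n k i Hi).
  - apply (borel_fun_gt n _ _ (borel_fun_coord n k i Hi)).
Qed.

Definition box := list lit.

Definition in_box (b : box) (x : vseq) : Prop := Forall (fun c => lit_holds c x) b.

Definition in_boxes (L : list box) (x : vseq) : Prop := Exists (fun b => in_box b x) L.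

Fixpoint disjoint_boxes (L : list box) : Prop :=
  match L with
  | [] => True
  | b :: L' => (forall x, in_box b x -> in_boxes L' x -> False) /\ disjoint_boxes L'
  end.

Lemma in_boxes_nil x : in_boxes [] x <-> False.
Proof. apply Exists_nil. Qed.

Lemma in_boxes_cons b L x : in_boxes (b :: L) x <-> in_box b x \/ in_boxes L x.
Proof. apply Exists_cons. Qed.

Lemma borel_box b : borel n (in_box b).
Proof.
  induction b as [|c b IH]; unfold in_box.
  - apply (sigma_ext _ _ _ (sigma_True _ Hb)); intros x; split; constructor.
  - apply (sigma_ext _ _ _ (sigma_and _ Hb _ _ (borel_lit c) IH)).
    intros x; symmetry; apply Forall_cons_iff.
Qed.

Lemma borel_boxes L : borel n (in_boxes L).
Proof.
  induction L as [|b L IH].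
  - apply (sigma_ext _ _ _ (sigma_False _ Hb)); intros x; rewrite in_boxes_nil; tauto.
  - apply (sigma_ext _ _ _ (sigma_or _ Hb _ _ (borel_box b) IH)).
    intros x; symmetry; apply in_boxes_cons.
Qed.

Lemma in_boxes_app L1 L2 x : in_boxes (L1 ++ L2) x <-> in_boxes L1 x \/ in_boxes L2 x.
Proof. apply Exists_app. Qed.

Lemma in_boxes_map_app b L x : in_boxes (map (app b) L) x <-> in_box b x /\ in_boxes L x.
Proof.
  unfold in_boxes, in_box; rewrite Exists_map.
  induction L as [|b' L IH]; rewrite ?Exists_nil, ?Exists_cons, ?Forall_app; [tauto|].
  rewrite IH; tauto.
Qed.

Lemma disjoint_boxes_app L1 L2 : disjoint_boxes L1 -> disjoint_boxes L2 ->
  (forall x, in_boxes L1 x -> in_boxes L2 x -> False) -> disjoint_boxes (L1 ++ L2).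
Proof.
  induction L1 as [|b L1 IH]; simpl; [tauto|].
  intros [Hb1 HL1] HL2 Hd; split.
  - intros x Hx; rewrite in_boxes_app; intros [H|H]; [exact (Hb1 x Hx H)|].
    apply (Hd x); [apply in_boxes_cons; left|]; assumption.
  - apply IH; [assumption..|]; intros x H1; apply Hd; apply in_boxes_cons; right; exact H1.
Qed.

Lemma disjoint_boxes_map_app b L : disjoint_boxes L -> disjoint_boxes (map (app b) L).
Proof.
  induction L as [|b' L IH]; simpl; [tauto|]; intros [Hd HL]; split; [|exact (IH HL)].
  intros x Hx HxL; apply in_boxes_map_app in HxL; unfold in_box in Hx; rewrite Forall_app in Hx.
  exact (Hd x (proj2 Hx) (proj2 HxL)).
Qed.

(* [~ (c1 /\ ... /\ cm)] is the disjoint union of [~ c1], [c1 /\ ~ c2], ... *)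
Fixpoint compl_box (b : box) : list box :=
  match b with
  | [] => []
  | c :: b' => [lit_neg c] :: map (app [c]) (compl_box b')
  end.

Lemma in_boxes_compl_box b x : in_boxes (compl_box b) x <-> ~ in_box b x.
Proof.
  induction b as [|c b IH].
  - unfold in_box; simpl; rewrite in_boxes_nil; split; [tauto|]; intros H; apply H; constructor.
  - change (in_boxes ([lit_neg c] :: map (app [c]) (compl_box b)) x <-> ~ in_box (c :: b) x).
    rewrite in_boxes_cons, in_boxes_map_app, IH; unfold in_box.
    rewrite !Forall_cons_iff, lit_holds_neg.
    assert (Forall (fun c' => lit_holds c' x) []) by constructor; tauto.
Qed.

Lemma disjoint_compl_box b : disjoint_boxes (compl_box b).
Proof.
  induction b as [|c b IH]; [exact I|].
  change (disjoint_boxes ([lit_neg c] :: map (app [c]) (compl_box b))).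
  split; [|apply disjoint_boxes_map_app, IH].
  intros x Hx HxL; apply in_boxes_map_app in HxL; unfold in_box in Hx, HxL.
  rewrite Forall_cons_iff, lit_holds_neg in Hx; rewrite Forall_cons_iff in HxL; tauto.
Qed.

Definition inter_boxes (L1 L2 : list box) : list box := flat_map (fun b1 => map (app b1) L2) L1.

Lemma in_boxes_inter L1 L2 x : in_boxes (inter_boxes L1 L2) x <-> in_boxes L1 x /\ in_boxes L2 x.
Proof.
  induction L1 as [|b L1 IH]; simpl.
  - rewrite !in_boxes_nil; tauto.
  - rewrite in_boxes_app, in_boxes_map_app; fold (inter_boxes L1 L2); rewrite IH.
    rewrite in_boxes_cons; tauto.
Qed.

Lemma disjoint_inter L1 L2 :
  disjoint_boxes L1 -> disjoint_boxes L2 -> disjoint_boxes (inter_boxes L1 L2).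
Proof.
  induction L1 as [|b L1 IH]; simpl; [tauto|]; intros [Hd1 HL1] HL2; fold (inter_boxes L1 L2).
  apply disjoint_boxes_app; [apply disjoint_boxes_map_app, HL2 | apply IH; assumption|].
  intros x H1 H2; apply in_boxes_map_app in H1; apply in_boxes_inter in H2.
  exact (Hd1 x (proj1 H1) (proj1 H2)).
Qed.

Definition compl_boxes (L : list box) : list box :=
  fold_right (fun b acc => inter_boxes (compl_box b) acc) [[]] L.

Lemma in_boxes_compl L x : in_boxes (compl_boxes L) x <-> ~ in_boxes L x.
Proof.
  induction L as [|b L IH]; simpl.
  - rewrite in_boxes_cons, in_boxes_nil; split; [tauto|]; left; constructor.
  - rewrite in_boxes_inter, in_boxes_compl_box, IH, in_boxes_cons; tauto.
Qed.

Lemma disjoint_compl L : disjoint_boxes (compl_boxes L).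
Proof.
  induction L as [|b L IH]; simpl; [|apply disjoint_inter; [apply disjoint_compl_box | exact IH]].
  split; [intros x _ H; apply in_boxes_nil in H; exact H | exact I].
Qed.

(* Going through complements makes the union disjoint. *)
Definition union_boxes (L1 L2 : list box) : list box :=
  compl_boxes (inter_boxes (compl_boxes L1) (compl_boxes L2)).

Lemma in_boxes_union L1 L2 x : in_boxes (union_boxes L1 L2) x <-> in_boxes L1 x \/ in_boxes L2 x.
Proof.
  unfold union_boxes; rewrite in_boxes_compl, in_boxes_inter, !in_boxes_compl.
  destruct (classic (in_boxes L1 x)); tauto.
Qed.

Lemma disjoint_union L1 L2 : disjoint_boxes (union_boxes L1 L2).
Proof. apply disjoint_compl. Qed.

End Boxes.

(** * From rectangles to Borel sets *)

Definition symdiff (X Y : vseq -> Prop) (x : vseq) : Prop := (X x /\ ~ Y x) \/ (Y x /\ ~ X x).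

Lemma borel_symdiff n X Y : borel n X -> borel n Y -> borel n (symdiff X Y).
Proof.
  intros HX HY; pose proof (borel_sigma n) as Hb.
  apply (sigma_or _ Hb); apply (sigma_and _ Hb); try apply (sigma_compl _ Hb); assumption.
Qed.

Section Extension.
Variable n : nat.
Let Hb := borel_sigma n.
Variables mu nu : (vseq -> Prop) -> R.
Hypothesis Hmu : is_measure n mu.
Hypothesis Hnu : is_measure n nu.
Hypothesis Hbox : forall b, mu (in_box n b) <= nu (in_box n b).

Lemma measure_le_boxes L : disjoint_boxes n L -> mu (in_boxes n L) <= nu (in_boxes n L).
Proof.
  induction L as [|b L IH]; intros Hd.
  - rewrite (measure_ext mu _ _ (in_boxes_nil n)), (measure_ext nu _ _ (in_boxes_nil n)).
    rewrite (measure_empty n mu Hmu), (measure_empty n nu Hnu); lra.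
  - destruct Hd as [Hd HL].
    rewrite (measure_ext mu _ _ (in_boxes_cons n b L)), (measure_ext nu _ _ (in_boxes_cons n b L)).
    rewrite (measure_add n mu Hmu _ _ (borel_box n b) (borel_boxes n L) Hd).
    rewrite (measure_add n nu Hnu _ _ (borel_box n b) (borel_boxes n L) Hd).
    specialize (Hbox b); specialize (IH HL); lra.
Qed.

Definition approximable (E : vseq -> Prop) : Prop :=
  borel n E /\
  forall eps, 0 < eps -> exists L, disjoint_boxes n L /\
    mu (symdiff E (in_boxes n L)) < eps /\ nu (symdiff E (in_boxes n L)) < eps.

Lemma approximable_box b : approximable (in_box n b).
Proof.
  split; [apply borel_box|]; intros eps Heps; exists [b]; split; [split; [|exact I]|].
  - intros x _ H; exact (proj1 (in_boxes_nil n x) H).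
  - assert (H0 : forall m, is_measure n m -> m (symdiff (in_box n b) (in_boxes n [b])) = 0).
    { intros m Hm; rewrite <- (measure_empty n m Hm); apply measure_ext; intros x.
      unfold symdiff; rewrite in_boxes_cons, in_boxes_nil; tauto. }
    rewrite (H0 mu Hmu), (H0 nu Hnu); lra.
Qed.

Lemma approximable_compl E : approximable E -> approximable (fun x => ~ E x).
Proof.
  intros [HE HA]; split; [apply (sigma_compl _ Hb), HE|]; intros eps Heps.
  destruct (HA eps Heps) as [L [Hd Hsd]]; exists (compl_boxes n L); split; [apply disjoint_compl|].
  rewrite !(measure_ext _ (symdiff (fun x => ~ E x) (in_boxes n (compl_boxes n L)))
                         (symdiff E (in_boxes n L)));
    [exact Hsd|..]; intros x; unfold symdiff; rewrite in_boxes_compl;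
    destruct (classic (E x)), (classic (in_boxes n L x)); tauto.
Qed.

Lemma approximable_or E F : approximable E -> approximable F -> approximable (fun x => E x \/ F x).
Proof.
  intros [HE HAE] [HF HAF]; split; [apply (sigma_or _ Hb); assumption|]; intros eps Heps.
  destruct (HAE (eps / 2)) as [L1 [_ [H1mu H1nu]]]; [lra|].
  destruct (HAF (eps / 2)) as [L2 [_ [H2mu H2nu]]]; [lra|].
  exists (union_boxes n L1 L2); split; [apply disjoint_union|].
  assert (Hle : forall m, is_measure n m ->
    m (symdiff (fun x => E x \/ F x) (in_boxes n (union_boxes n L1 L2))) <=
    m (symdiff E (in_boxes n L1)) + m (symdiff F (in_boxes n L2))).
  { intros m Hm; apply (measure_le_union n m Hm).
    - apply borel_symdiff; [apply (sigma_or _ Hb); assumption | apply borel_boxes].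
    - apply borel_symdiff; [assumption | apply borel_boxes].
    - apply borel_symdiff; [assumption | apply borel_boxes].
    - intros x; unfold symdiff; rewrite in_boxes_union; tauto. }
  pose proof (Hle mu Hmu); pose proof (Hle nu Hnu); lra.
Qed.

Lemma approximable_Union (E : nat -> vseq -> Prop) :
  (forall j, approximable (E j)) -> approximable (fun x => exists j, E j x).
Proof.
  intros HE.
  set (U := fun M x => exists j, (j < M)%nat /\ E j x).
  assert (HU : forall M, approximable (U M)).
  { induction M as [|M IH].
    - apply (sigma_ext _ _ _ (approximable_compl _ (approximable_box []))); intros x; split.
      + intros H; exfalso; apply H; constructor.
      + intros [j [Hj _]]; lia.
    - apply (sigma_ext _ _ _ (approximable_or _ _ IH (HE M))); intros x; split.
      + intros [[j [Hj Hx]]|Hx]; [exists j | exists M]; split; (lia || assumption).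
      + intros [j [Hj Hx]]; destruct (Nat.eq_dec j M) as [->|Hne]; [right; exact Hx|].
        left; exists j; split; [lia | exact Hx]. }
  assert (HUb : forall M, borel n (U M)) by (intros M; apply HU).
  assert (Hincr : forall M x, U M x -> U (S M) x)
    by (intros M x [j [Hj Hx]]; exists j; split; [lia | exact Hx]).
  assert (HUE : forall x, (exists M, U M x) <-> (exists j, E j x)).
  { intros x; split; [intros [M [j [_ Hx]]] | intros [j Hx]; exists (S j), j; split; [lia|]];
      eauto. }
  split; [apply (sigma_Union _ Hb); intros j; apply HE|]; intros eps Heps.
  destruct (measure_tail_incr n mu Hmu U HUb Hincr (eps / 2)) as [M1 HM1]; [lra|].
  destruct (measure_tail_incr n nu Hnu U HUb Hincr (eps / 2)) as [M2 HM2]; [lra|].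
  set (M := Nat.max M1 M2).
  destruct (proj2 (HU M) (eps / 2)) as [L [Hd [Hmu' Hnu']]]; [lra|].
  exists L; split; [exact Hd|].
  assert (Hle : forall m, is_measure n m ->
    m (symdiff (fun x => exists j, E j x) (in_boxes n L)) <=
    m (symdiff (U M) (in_boxes n L)) + m (fun x => (exists M, U M x) /\ ~ U M x)).
  { intros m Hm; apply (measure_le_union n m Hm).
    - apply borel_symdiff; [apply (sigma_Union _ Hb); intros j; apply HE | apply borel_boxes].
    - apply borel_symdiff; [apply HUb | apply borel_boxes].
    - apply (sigma_and _ Hb); [apply (sigma_Union _ Hb), HUb | apply (sigma_compl _ Hb), HUb].
    - intros x; unfold symdiff; rewrite HUE; destruct (classic (U M x)) as [HMx|HMx]; [|tauto].
      assert (exists j, E j x) by (apply HUE; exists M; exact HMx); tauto. }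
  pose proof (Hle mu Hmu); pose proof (Hle nu Hnu).
  pose proof (HM1 M (Nat.le_max_l M1 M2)); pose proof (HM2 M (Nat.le_max_r M1 M2)); lra.
Qed.

Lemma approximable_sigma : is_sigma_algebra approximable.
Proof.
  split; [|split].
  - apply (sigma_ext _ _ _ (approximable_box [])); intros x; split; [trivial | constructor].
  - apply approximable_compl.
  - apply approximable_Union.
Qed.

Lemma approximable_rect K a b : approximable (rect n K a b).
Proof.
  apply (sigma_ext _ (fun x => forall k, (k < K)%nat ->
                       forall i, (i < n)%nat -> a k i < x k i <= b k i)).
  - apply (sigma_forall_lt _ approximable_sigma); intros k Hk.
    apply (sigma_forall_lt _ approximable_sigma); intros i Hi.
    apply (sigma_ext _ _ _ (approximable_box [Lit n k (exist _ i Hi) false (a k i);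
                                              Lit n k (exist _ i Hi) true (b k i)])).
    intros x; unfold in_box, lit_holds; rewrite !Forall_cons_iff; simpl.
    split; [tauto|]; intros H; repeat split; try apply H; constructor.
  - intros x; unfold rect; split; intros H; intros; apply H; assumption.
Qed.

Lemma measure_le_borel E : borel n E -> mu E <= nu E.
Proof.
  intros HE; destruct (HE approximable approximable_sigma approximable_rect) as [_ HA].
  apply Rle_plus_epsilon; intros eps Heps.
  destruct (HA (eps / 2)) as [L [Hd [Hmu' Hnu']]]; [lra|].
  assert (Hsd : borel n (symdiff E (in_boxes n L)))
    by (apply borel_symdiff; [exact HE | apply borel_boxes]).
  assert (H1 : mu E <= mu (in_boxes n L) + mu (symdiff E (in_boxes n L))).
  { apply (measure_le_union n mu Hmu _ _ _ HE (borel_boxes n L) Hsd).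
    intros x Hx; unfold symdiff; destruct (classic (in_boxes n L x)); tauto. }
  assert (H2 : nu (in_boxes n L) <= nu E + nu (symdiff E (in_boxes n L))).
  { apply (measure_le_union n nu Hnu _ _ _ (borel_boxes n L) HE Hsd).
    intros x Hx; unfold symdiff; destruct (classic (E x)); tauto. }
  pose proof (measure_le_boxes L Hd); lra.
Qed.

End Extension.

Section BoxesFromRects.
Variable n : nat.
Let Hb := borel_sigma n.

Lemma rect_inter_lit K a b (c : lit n) : (lit_k n c < K)%nat ->
  exists a' b', forall x, lit_holds n c x /\ rect n K a b x <-> rect n K a' b' x.
Proof.
  destruct c as [k [i Hi] [|] v]; unfold lit_holds; simpl; intros Hk.
  - exists a, (fun k' i' => if andb (Nat.eqb k' k) (Nat.eqb i' i) then Rmin (b k i) v else b k' i').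
    intros x; split.
    + intros [Hv H] k' i' Hk' Hi'; specialize (H k' i' Hk' Hi').
      destruct (Nat.eqb_spec k' k), (Nat.eqb_spec i' i); simpl; subst; try exact H.
      split; [apply H | apply Rmin_glb; [apply H | exact Hv]].
    + intros H; split.
      * destruct (H k i Hk Hi) as [_ Hx]; rewrite !Nat.eqb_refl in Hx; simpl in Hx.
        exact (Rle_trans _ _ _ Hx (Rmin_r _ _)).
      * intros k' i' Hk' Hi'; generalize (H k' i' Hk' Hi'); clear H.
        destruct (Nat.eqb_spec k' k), (Nat.eqb_spec i' i); simpl; intros H; subst; try exact H.
        split; [apply H | exact (Rle_trans _ _ _ (proj2 H) (Rmin_l _ _))].
  - exists (fun k' i' => if andb (Nat.eqb k' k) (Nat.eqb i' i) then Rmax (a k i) v else a k' i'), b.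
    intros x; split.
    + intros [Hv H] k' i' Hk' Hi'; specialize (H k' i' Hk' Hi').
      destruct (Nat.eqb_spec k' k), (Nat.eqb_spec i' i); simpl; subst; try exact H.
      split; [apply Rmax_lub_lt; [apply H | exact Hv] | apply H].
    + intros H; split.
      * destruct (H k i Hk Hi) as [Hx _]; rewrite !Nat.eqb_refl in Hx; simpl in Hx.
        exact (Rle_lt_trans _ _ _ (Rmax_r _ _) Hx).
      * intros k' i' Hk' Hi'; generalize (H k' i' Hk' Hi'); clear H.
        destruct (Nat.eqb_spec k' k), (Nat.eqb_spec i' i); simpl; intros H; subst; try exact H.
        split; [exact (Rle_lt_trans _ _ _ (Rmax_l _ _) (proj1 H)) | apply H].
Qed.

Lemma box_inter_rect K a b (l : box n) : Forall (fun c => (lit_k n c < K)%nat) l ->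
  exists a' b', forall x, in_box n l x /\ rect n K a b x <-> rect n K a' b' x.
Proof.
  induction l as [|c l IH]; intros Hl.
  - exists a, b; intros x; unfold in_box; split; [tauto | intros H; split; [constructor | exact H]].
  - apply Forall_cons_iff in Hl; destruct Hl as [Hc Hl].
    destruct (IH Hl) as [a1 [b1 H1]]; destruct (rect_inter_lit K a1 b1 c Hc) as [a2 [b2 H2]].
    exists a2, b2; intros x; rewrite <- H2, <- H1; unfold in_box; rewrite Forall_cons_iff; tauto.
Qed.

Lemma box_lit_bound (l : box n) : exists K, Forall (fun c => (lit_k n c < K)%nat) l.
Proof.
  induction l as [|c l [K HK]]; [exists 0%nat; constructor|].
  exists (Nat.max (S (lit_k n c)) K); constructor; [lia|].
  apply (Forall_impl _ (fun c' H => Nat.lt_le_trans _ _ _ H (Nat.le_max_r _ _)) HK).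
Qed.

Variables mu nu : (vseq -> Prop) -> R.
Hypothesis Hmu : is_measure n mu.
Hypothesis Hnu : is_measure n nu.
Hypothesis Hrect : forall K a b, mu (rect n K a b) <= nu (rect n K a b).

(* A box is the increasing union of its intersections with the rectangles (-M, M], and each
   of these is itself a rectangle. *)
Lemma measure_le_box l : mu (in_box n l) <= nu (in_box n l).
Proof.
  destruct (box_lit_bound l) as [K HK].
  set (F := fun (M : nat) x => in_box n l x /\ rect n K (fun _ _ => - INR M) (fun _ _ => INR M) x).
  assert (HF : forall M, borel n (F M))
    by (intros M; apply (sigma_and _ Hb); [apply borel_box | apply borel_rect]).
  assert (HFle : forall M, mu (F M) <= nu (F M)).
  { intros M.
    destruct (box_inter_rect K (fun _ _ => - INR M) (fun _ _ => INR M) l HK) as [a [b Hab]].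
    unfold F; rewrite (measure_ext mu _ _ Hab), (measure_ext nu _ _ Hab); apply Hrect. }
  assert (Hincr : forall M x, F M x -> F (S M) x).
  { intros M x [Hl Hx]; split; [exact Hl|]; intros k i Hk Hi; specialize (Hx k i Hk Hi).
    rewrite S_INR; lra. }
  assert (HU : forall x, (exists M, F M x) <-> in_box n l x).
  { intros x; split; [intros [M [Hx _]]; exact Hx|]; intros Hx.
    destruct (finite_bound x K n) as [M HM]; exists M; split; [exact Hx|].
    intros k i Hk Hi; specialize (HM k i Hk Hi); apply Rabs_def2 in HM; lra. }
  apply Rle_plus_epsilon; intros eps Heps.
  destruct (measure_cont_incr n mu Hmu F HF Hincr eps Heps) as [M HM].
  rewrite (measure_ext mu _ _ HU) in HM.
  pose proof (HFle M).
  pose proof (measure_mono n nu Hnu _ _ (HF M) (borel_box n l) (fun x H => proj1 H)); lra.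
Qed.

End BoxesFromRects.

(** * The Laplace distribution *)

Lemma nondecreasing_glue3 (G : R -> R) p q : p <= q ->
  (forall x y, x <= y <= p -> G x <= G y) ->
  (forall x y, p <= x <= y /\ y <= q -> G x <= G y) ->
  (forall x y, q <= x <= y -> G x <= G y) ->
  forall x y, x <= y -> G x <= G y.
Proof.
  intros Hpq H1 H2 H3 x y Hxy.
  destruct (Rle_dec x p) as [Hx|Hx]; [|destruct (Rle_dec x q) as [Hx'|Hx']].
  - destruct (Rle_dec y p); [apply H1; lra|].
    apply Rle_trans with (G p); [apply H1; lra|].
    destruct (Rle_dec y q); [apply H2; lra|].
    apply Rle_trans with (G q); [apply H2 | apply H3]; lra.
  - destruct (Rle_dec y q); [apply H2; lra|].
    apply Rle_trans with (G q); [apply H2 | apply H3]; lra.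
  - apply H3; lra.
Qed.

Section LaplaceCdf.
Variable beta : R.
Hypothesis Hbeta : 0 < beta.

Let e (t : R) : R := exp (t / beta).

Lemma exp_div_le x y : x <= y -> e x <= e y.
Proof.
  intros Hxy; apply exp_le_compat; unfold Rdiv.
  apply Rmult_le_compat_r; [left; apply Rinv_0_lt_compat, Hbeta | exact Hxy].
Qed.

Lemma exp_div_plus x y : e (x + y) = e x * e y.
Proof. unfold e; rewrite <- exp_plus; f_equal; field; lra. Qed.

Lemma exp_div_opp x : exp (- x / beta) = / e x.
Proof. unfold e; rewrite <- exp_Ropp; f_equal; field; lra. Qed.

Lemma exp_div_ge1 x : 0 <= x -> 1 <= e x.
Proof.
  intros Hx; replace 1 with (e 0) by (unfold e; rewrite Rdiv_0_l, exp_0; reflexivity).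
  apply exp_div_le, Hx.
Qed.

Lemma laplace_cdf_nonpos t : t <= 0 -> laplace_cdf beta t = e t / 2.
Proof.
  intros Ht; unfold laplace_cdf; destruct (Rlt_dec t 0); [reflexivity|].
  replace t with 0 by lra; unfold e; rewrite Ropp_0, Rdiv_0_l, exp_0; lra.
Qed.

Lemma laplace_cdf_nonneg t : 0 <= t -> laplace_cdf beta t = 1 - / e t / 2.
Proof.
  intros Ht; unfold laplace_cdf; destruct (Rlt_dec t 0); [lra|]; rewrite exp_div_opp; reflexivity.
Qed.

Lemma laplace_cdf_opp t : laplace_cdf beta (- t) = 1 - laplace_cdf beta t.
Proof.
  destruct (Rle_dec 0 t).
  - rewrite laplace_cdf_nonpos, laplace_cdf_nonneg by lra; rewrite <- exp_div_opp; unfold e; lra.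
  - rewrite laplace_cdf_nonneg, laplace_cdf_nonpos by lra.
    unfold e; rewrite <- exp_Ropp; replace (- (- t / beta)) with (t / beta) by (field; lra); lra.
Qed.

Lemma laplace_cdf_le a b : a <= b -> laplace_cdf beta a <= laplace_cdf beta b.
Proof.
  intros Hab; pose proof (exp_div_le _ _ Hab) as Hle.
  assert (Hpos : forall t, 0 < e t) by (intros; apply exp_pos).
  destruct (Rle_dec b 0); [rewrite !laplace_cdf_nonpos by lra; lra|].
  destruct (Rle_dec a 0).
  - rewrite laplace_cdf_nonpos, laplace_cdf_nonneg by lra.
    pose proof (exp_div_ge1 b ltac:(lra)); pose proof (exp_div_le a 0 ltac:(lra)).
    replace (e 0) with 1 in * by (unfold e; rewrite Rdiv_0_l, exp_0; reflexivity).
    assert (/ e b <= 1) by (rewrite <- Rinv_1; apply Rinv_le_contravar; lra); lra.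
  - rewrite !laplace_cdf_nonneg by lra.
    assert (/ e b <= / e a) by (apply Rinv_le_contravar; [apply Hpos | exact Hle]); lra.
Qed.

(* With [F = laplace_cdf beta] and [C = e d], the map [t |-> C F(t) - F(t + d)] is
   nondecreasing; its three pieces are [0] on [t <= -d], [(u + 1/u)/2 - 1] for
   [u = e (t + d) >= 1] on [-d <= t <= 0], and [C - 1 - (C - 1/C) / (2 e t)] on [t >= 0]. *)
Lemma laplace_cdf_shift_nonneg d a b : 0 <= d -> a <= b ->
  laplace_cdf beta (b + d) - laplace_cdf beta (a + d) <=
  e d * (laplace_cdf beta b - laplace_cdf beta a).
Proof.
  intros Hd Hab.
  set (C := e d); set (G := fun t => C * laplace_cdf beta t - laplace_cdf beta (t + d)).
  assert (HC : 1 <= C) by (apply exp_div_ge1, Hd).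
  assert (Hpos : forall t, 0 < e t) by (intros; apply exp_pos).
  enough (HG : G a <= G b) by (unfold G in HG; lra).
  apply (nondecreasing_glue3 G (- d) 0); [lra| | | | exact Hab]; intros x y Hxy; unfold G.
  - rewrite !laplace_cdf_nonpos, !exp_div_plus by lra; fold C; lra.
  - rewrite (laplace_cdf_nonpos x), (laplace_cdf_nonpos y), (laplace_cdf_nonneg (x + d)),
      (laplace_cdf_nonneg (y + d)) by lra.
    pose proof (exp_div_ge1 (x + d) ltac:(lra)) as Hu1.
    pose proof (exp_div_le (x + d) (y + d) ltac:(lra)) as Huv.
    rewrite (exp_div_plus x d) in Hu1, Huv |- *; rewrite (exp_div_plus y d) in Huv |- *.
    fold C in Hu1, Huv |- *.
    set (u := e x * C) in *; set (v := e y * C) in *.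
    assert (Hinv : / u - / v = (v - u) * / (u * v)) by (field; split; apply Rgt_not_eq; lra).
    assert (Huv1 : / (u * v) <= 1) by (rewrite <- Rinv_1; apply Rinv_le_contravar; nra).
    assert ((v - u) * / (u * v) <= (v - u) * 1) by (apply Rmult_le_compat_l; lra).
    replace (C * (e x / 2)) with (u / 2) by (unfold u; lra).
    replace (C * (e y / 2)) with (v / 2) by (unfold v; lra); lra.
  - rewrite !laplace_cdf_nonneg, !exp_div_plus by lra; fold C.
    pose proof (exp_div_le x y ltac:(lra)); pose proof (Hpos x); pose proof (Hpos y).
    assert (HCinv : / C <= C)
      by (apply Rle_trans with 1; [rewrite <- Rinv_1; apply Rinv_le_contravar|]; lra).
    assert (Hxy' : / e y <= / e x) by (apply Rinv_le_contravar; lra).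
    rewrite !Rinv_mult.
    assert (0 <= (/ e x - / e y) * (C - / C)) by (apply Rmult_le_pos; lra); nra.
Qed.

Lemma laplace_cdf_shift d a b : a <= b ->
  laplace_cdf beta (b + d) - laplace_cdf beta (a + d) <=
  e (Rabs d) * (laplace_cdf beta b - laplace_cdf beta a).
Proof.
  intros Hab; destruct (Rle_dec 0 d) as [Hd|Hd].
  - rewrite Rabs_pos_eq by exact Hd; apply laplace_cdf_shift_nonneg; assumption.
  - rewrite Rabs_left by lra.
    pose proof (laplace_cdf_shift_nonneg (- d) (- b) (- a) ltac:(lra) ltac:(lra)) as H.
    replace (- b + - d) with (- (b + d)) in H by ring.
    replace (- a + - d) with (- (a + d)) in H by ring.
    rewrite !laplace_cdf_opp in H; lra.
Qed.

End LaplaceCdf.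

(** * Translating the noise *)

Lemma rect_lower_min n K a b : rect n K a b = rect n K (fun k i => Rmin (a k i) (b k i)) b.
Proof.
  apply set_ext; intros x; unfold rect; split; intros H k i Hk Hi; specialize (H k i Hk Hi);
    unfold Rmin in *; destruct (Rle_dec (a k i) (b k i)); lra.
Qed.

Lemma noise_law_translate_rect n c q P (D : vseq) K a b : noise_law n c q P ->
  (forall k i, (i < n)%nat -> 0 < c i * q i ^ k) ->
  P (rect n K (fun k i => a k i + D k i) (fun k i => b k i + D k i)) <=
  exp (rsum K (fun k => rsum n (fun i => Rabs (D k i) / (c i * q i ^ k)))) * P (rect n K a b).
Proof.
  intros [_ [_ HPrect]] Hbeta.
  rewrite (rect_lower_min n K a b), (rect_lower_min n K (fun k i => a k i + D k i)).
  replace (fun k i => Rmin (a k i + D k i) (b k i + D k i))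
    with (fun k i => Rmin (a k i) (b k i) + D k i)
    by (do 2 (apply functional_extensionality; intro); unfold Rmin;
        destruct (Rle_dec (a _ _) (b _ _)), (Rle_dec (a _ _ + D _ _) (b _ _ + D _ _)); lra).
  assert (Hab : forall k i, Rmin (a k i) (b k i) <= b k i) by (intros; apply Rmin_r).
  rewrite !HPrect by (intros k i _ _; cbv beta; specialize (Hab k i); lra).
  set (F := fun k i t => laplace_cdf (c i * q i ^ k) t).
  assert (HFle : forall k i, (i < n)%nat -> forall s t, s <= t -> F k i s <= F k i t)
    by (intros k i Hi s t Hst; apply laplace_cdf_le; [apply Hbeta, Hi | exact Hst]).
  rewrite <- !rprod_exp, <- rprod_mult.
  apply rprod_le_compat; intros k Hk; split.
  - apply rprod_nonneg; intros i Hi.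
    pose proof (HFle k i Hi _ _ (Rplus_le_compat_r (D k i) _ _ (Hab k i))); unfold F in *; lra.
  - rewrite <- rprod_exp, <- rprod_mult; apply rprod_le_compat; intros i Hi; split.
    + pose proof (HFle k i Hi _ _ (Rplus_le_compat_r (D k i) _ _ (Hab k i))); unfold F in *; lra.
    + apply laplace_cdf_shift; [apply Hbeta, Hi | apply Hab].
Qed.

Definition state_gap (s : nat -> R) (t1 t2 : vec) : vseq :=
  fun k i => (1 - s i) ^ k * (t2 i - t1 i).

Definition noise_shift (D eta : vseq) : vseq := fun k i => eta k i - D k i.

Lemma borel_preimage_noise_shift n D E : borel n E -> borel n (fun eta => E (noise_shift D eta)).
Proof.
  apply borel_preimage_fun; intros k i Hi; unfold noise_shift.
  apply borel_fun_minus; [apply borel_fun_coord, Hi | apply borel_fun_const].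
Qed.

Section Algorithm.
Variable n : nat.
Variable A : nat -> nat -> R.
Variable h : R.
Variable s : nat -> R.

Lemma borel_fun_theta t0 k i : (i < n)%nat -> borel_fun n (fun eta => theta n A h s t0 eta k i).
Proof.
  revert i; induction k as [|k IH]; intros i Hi; [exact (borel_fun_const n (t0 i))|].
  simpl; unfold lap.
  assert (Hx : forall j, (j < n)%nat -> borel_fun n (fun eta => theta n A h s t0 eta k j + eta k j))
    by (intros j Hj; apply borel_fun_plus; [apply IH, Hj | apply borel_fun_coord, Hj]).
  apply borel_fun_plus; [apply borel_fun_minus; [apply IH, Hi|] |
                        apply borel_fun_scal, borel_fun_coord, Hi].
  apply borel_fun_scal, borel_fun_minus; [apply borel_fun_scal, Hx, Hi|].
  apply (borel_fun_rsum n n (fun eta j => A i j * (theta n A h s t0 eta k j + eta k j))).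
  intros j Hj; apply borel_fun_scal, Hx, Hj.
Qed.

Lemma borel_preimage_Xmap t0 O : borel n O -> borel n (fun eta => O (Xmap n A h s t0 eta)).
Proof.
  apply borel_preimage_fun; intros k i Hi; unfold Xmap.
  apply borel_fun_plus; [apply borel_fun_theta, Hi | apply borel_fun_coord, Hi].
Qed.

Variables t1 t2 : vec.

Lemma theta_translate eta k :
  theta n A h s t2 (noise_shift (state_gap s t1 t2) eta) k =
  fun i => theta n A h s t1 eta k i + state_gap s t1 t2 k i.
Proof.
  induction k as [|k IH]; apply functional_extensionality; intros i; simpl.
  - unfold state_gap; simpl; ring.
  - rewrite IH; unfold lap, noise_shift, state_gap; simpl.
    replace (fun j => A i j * (theta n A h s t1 eta k j + (1 - s j) ^ k * (t2 j - t1 j) +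
                               (eta k j - (1 - s j) ^ k * (t2 j - t1 j))))
      with (fun j => A i j * (theta n A h s t1 eta k j + eta k j))
      by (apply functional_extensionality; intros j; ring).
    ring.
Qed.

Lemma Xmap_translate eta :
  Xmap n A h s t1 eta = Xmap n A h s t2 (noise_shift (state_gap s t1 t2) eta).
Proof.
  apply functional_extensionality; intros k; apply functional_extensionality; intros i.
  unfold Xmap; rewrite theta_translate; unfold noise_shift; ring.
Qed.

End Algorithm.

Lemma geometric_gap_sum_le delta c q sigma D K : 0 < c -> Rabs (sigma - 1) < q -> Rabs D <= delta ->
  rsum K (fun k => Rabs ((1 - sigma) ^ k * D) / (c * q ^ k)) <=
  delta * q / (c * (q - Rabs (sigma - 1))).
Proof.
  intros Hc Hq HD.
  assert (Hq0 : 0 < q) by (pose proof (Rabs_pos (sigma - 1)); lra).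
  set (r := Rabs (sigma - 1) / q).
  assert (Hr : 0 <= r < 1).
  { unfold r; split; [apply Rmult_le_pos; [apply Rabs_pos | left; apply Rinv_0_lt_compat, Hq0]|].
    apply Rmult_lt_reg_r with q; [exact Hq0|]; unfold Rdiv; rewrite Rmult_assoc, Rinv_l; lra. }
  assert (Hterm : forall k, Rabs ((1 - sigma) ^ k * D) / (c * q ^ k) = Rabs D / c * r ^ k).
  { intros k; unfold r; rewrite Rabs_mult, <- RPow_abs, Rabs_minus_sym.
    unfold Rdiv; rewrite Rpow_mult_distr, pow_inv.
    assert (q ^ k <> 0) by (apply pow_nonzero; lra); field; split; lra. }
  assert (Hsum : rsum K (fun k => Rabs ((1 - sigma) ^ k * D) / (c * q ^ k)) =
                 Rabs D / c * rsum K (fun k => r ^ k))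
    by (induction K as [|K IH]; simpl; [ring | rewrite IH, Hterm; ring]).
  rewrite Hsum; apply Rle_trans with (delta / c * / (1 - r)).
  - apply Rmult_le_compat.
    + apply Rmult_le_pos; [apply Rabs_pos | left; apply Rinv_0_lt_compat, Hc].
    + apply rsum_nonneg; intros k _; apply pow_le, Hr.
    + unfold Rdiv; apply Rmult_le_compat_r; [left; apply Rinv_0_lt_compat|]; assumption.
    + apply rsum_geom_le, Hr.
  - right; unfold r; field; repeat split; lra.
Qed.

Lemma state_gap_weighted_sum_le delta s c q i0 (t1 t2 : vec) n K : (i0 < n)%nat ->
  0 < c i0 -> Rabs (s i0 - 1) < q i0 -> Rabs (t2 i0 - t1 i0) <= delta ->
  (forall i, (i < n)%nat -> i <> i0 -> t2 i = t1 i) ->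
  rsum K (fun k => rsum n (fun i => Rabs (state_gap s t1 t2 k i) / (c i * q i ^ k))) <=
  eps_i delta s c q i0.
Proof.
  intros Hi0 Hc Hq Hdelta Hother.
  replace (fun k => rsum n (fun i => Rabs (state_gap s t1 t2 k i) / (c i * q i ^ k)))
    with (fun k => Rabs ((1 - s i0) ^ k * (t2 i0 - t1 i0)) / (c i0 * q i0 ^ k)).
  - apply geometric_gap_sum_le; assumption.
  - apply functional_extensionality; intros k; rewrite (rsum_single n _ i0 Hi0); [reflexivity|].
    intros i Hi Hne; unfold state_gap.
    rewrite (Hother i Hi Hne), Rminus_diag, Rmult_0_r, Rabs_R0; apply Rdiv_0_l.
Qed.

Lemma Xmap_adjacent_prob_le n A h s c q P delta i0 (t1 t2 : vec) O :
  (forall i, (i < n)%nat -> 0 < c i) -> (forall i, (i < n)%nat -> Rabs (s i - 1) < q i < 1) ->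
  noise_law n c q P -> (i0 < n)%nat -> Rabs (t2 i0 - t1 i0) <= delta ->
  (forall i, (i < n)%nat -> i <> i0 -> t2 i = t1 i) -> borel n O ->
  P (fun eta => O (Xmap n A h s t1 eta))
    <= exp (eps_i delta s c q i0) * P (fun eta => O (Xmap n A h s t2 eta)).
Proof.
  intros Hc Hq HP Hi0 Hdelta Hother HO.
  set (D := state_gap s t1 t2).
  set (mu := fun E : vseq -> Prop => P (fun eta => E (noise_shift D eta))).
  set (nu := fun E : vseq -> Prop => exp (eps_i delta s c q i0) * P E).
  assert (HPm : is_measure n P) by exact (noise_law_measure n c q P HP).
  assert (Hmu : is_measure n mu)
    by exact (is_measure_preimage n P (noise_shift D) (borel_preimage_noise_shift n D) HPm).
  assert (Hnu : is_measure n nu) by (apply is_measure_scal; [left; apply exp_pos | exact HPm]).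
  assert (Hbeta : forall k i, (i < n)%nat -> 0 < c i * q i ^ k).
  { intros k i Hi; apply Rmult_lt_0_compat; [apply Hc, Hi | apply pow_lt].
    pose proof (Rabs_pos (s i - 1)); pose proof (Hq i Hi); lra. }
  assert (Hrect : forall K a b, mu (rect n K a b) <= nu (rect n K a b)).
  { intros K a b; unfold mu, nu.
    rewrite (measure_ext P _ (rect n K (fun k i => a k i + D k i) (fun k i => b k i + D k i)))
      by (intros x; unfold rect, noise_shift; split; intros H k i Hk Hi;
          specialize (H k i Hk Hi); lra).
    eapply Rle_trans; [apply (noise_law_translate_rect n c q P D K a b HP Hbeta)|].
    apply Rmult_le_compat_r; [apply (proj1 HPm), borel_rect|].
    apply exp_le_compat, state_gap_weighted_sum_le; try apply Hq; try apply Hc; assumption. }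
  replace (fun eta => O (Xmap n A h s t1 eta))
    with (fun eta => O (Xmap n A h s t2 (noise_shift D eta)))
    by (apply functional_extensionality; intros eta;
        rewrite (Xmap_translate n A h s t1 t2); reflexivity).
  exact (measure_le_borel n mu nu Hmu Hnu (measure_le_box n mu nu Hmu Hnu Hrect) _
           (borel_preimage_Xmap n A h s t2 O HO)).
Qed.

Theorem mainTheorem6 (n : nat) (A : nat -> nat -> R) (h : R) (s c q : nat -> R)
  (HA : symmetric_nonneg n A) (Hconn : connected n A)
  (Hh : 0 < h /\ h < 1 / dmax n A)
  (Hs : forall i, (i < n)%nat -> 0 < s i < 2)
  (Hc : forall i, (i < n)%nat -> 0 < c i)
  (Hq : forall i, (i < n)%nat -> Rabs (s i - 1) < q i < 1)
  (P : (vseq -> Prop) -> R) (HP : noise_law n c q P)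
  (delta : R) (Hdelta : 0 < delta) :
  (forall (i0 : nat) (t1 t2 : vec) (O : vseq -> Prop),
      (i0 < n)%nat ->
      Rabs (t2 i0 - t1 i0) <= delta ->
      (forall i, (i < n)%nat -> i <> i0 -> t2 i = t1 i) ->
      borel n O ->
      P (fun eta => O (Xmap n A h s t1 eta))
        <= exp (eps_i delta s c q i0) * P (fun eta => O (Xmap n A h s t2 eta)))
  /\ diff_private n A h s P delta (rmax_upto n (eps_i delta s c q)).
Proof.
  (* The bound does not depend on the graph, the step size or on s i < 2; these
     hypotheses only matter for the convergence of the algorithm. *)
  pose proof (fun i0 t1 t2 O => Xmap_adjacent_prob_le n A h s c q P delta i0 t1 t2 O Hc Hq HP)
    as Hsingle.
  split; [exact Hsingle|].
  intros t1 t2 O [i0 [Hi0 [Hdelta' Hother]]] HO.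
  apply Rle_trans with (1 := Hsingle i0 t1 t2 O Hi0 Hdelta' Hother HO).
  apply Rmult_le_compat_r.
  - apply (noise_law_measure n c q P HP), borel_preimage_Xmap, HO.
  - apply exp_le_compat, rmax_upto_ge, Hi0.
Qed.
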